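(* Let $G$ be a finite connected graph with node set $V$ and radius $\operatorname{rad}(G)$. Suppose a one-to-all distance based algorithm for computing the radius of $G$ performs one-to-all distance queries from exactly the nodes of a set $L\subseteq V$. Then for every ranking $r$ of $V$, the set $L\cup A_r(L)$ is a radius certificate of $G$. Consequently, any one-to-all distance based algorithm for the radius performs at least $\frac{1}{2}|L_{OPT}|$ one-to-all distance queries, where $|L_{OPT}|$ is the minimum size of a radius certificate of $G$ (equivalently, the minimum size of a covering of $V$ with the collection $\{\overline{B}(u,\operatorname{rad}(G)) : u\in V\}$).
   Context: $G$ is an undirected unweighted connected graph with finite node set $V$; $d(u,v)$ is the shortest-path distance, $e(u)=\max_{v\in V}d(u,v)$ the eccentricity, $\operatorname{rad}(G)=\min_u e(u)$. A ranking $r$ is an injective map from $V$ to a totally ordered set. The antipode $A_r(u)$ of $u$ is the node $v$ maximizing the pair $(d(u,v),r(v))$ in lexicographic order (a furthest node from $u$ of highest rank), and $A_r(W)=\{A_r(u):u\in W\}$. The coball is $\overline{B}(u,\rho)=\{v\in V: d(u,v)\ge \rho\}$. A radius certificate is a set $L\subseteq V$ such that every $u\in V$ has $\max_{x\in L}d(u,x)\ge \operatorname{rad}(G)$. A one-to-all distance query from a node $x$ returns the vector $(d(x,v))_{v\in V}$. A one-to-all distance based algorithm is one that accesses the graph only through one-to-all distance queries and relies solely on the distances known from its queries, the triangle inequality and non-negativity of distances for bounding unknown distances (so its correctness certifies, for every node $u$, that $e(u)\ge\operatorname{rad}(G)$ by such reasoning). *)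

From HB Require Import structures.
From mathcomp Require Import all_boot all_order all_algebra.
Set Implicit Arguments. Unset Strict Implicit. Unset Printing Implicit Defensive.
Import Order.TTheory GRing.Theory Num.Theory.

Section Graph.
Variables (T : finType) (e : rel T).

Definition simple_graph := symmetric e /\ irreflexive e.
Definition connected_graph := forall u v : T, connect e u v.

Definition walk_of_length (u v : T) (n : nat) : bool :=
  [exists p : n.-tuple T, path e u p && (last u p == v)].

(* shortest-path distance: least n (< #|T|) with a walk of length n from u
   to v; in a connected graph this is exactly d(u,v). *)
Definition dist (u v : T) : nat := find (walk_of_length u v) (iota 0 #|T|).

Definition ecc (u : T) : nat := \max_(v : T) dist u v.

(* radius = min_u e(u)  (default #|T| only matters for the empty graph) *)
Definition rad : nat := \big[minn/#|T|]_(u : T) ecc u.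

(* radius certificate: every u has max_{x in L} d(u,x) >= rad(G)
   (max over the empty set is 0) *)
Definition radius_certificate (L : {set T}) : Prop :=
  forall u : T, rad <= \max_(x in L) dist u x.

Definition is_antipode (disp : Order.disp_t) (O : orderType disp) (r : T -> O)
    (u v : T) : bool :=
  [forall w, (dist u w < dist u v) || ((dist u w == dist u v) && (r w <= r v)%O)].

Definition antipode (disp : Order.disp_t) (O : orderType disp) (r : T -> O)
    (u : T) : T := odflt u [pick v | is_antipode r u v].

Definition antipode_set (disp : Order.disp_t) (O : orderType disp) (r : T -> O)
    (W : {set T}) : {set T} := [set antipode r u | u in W].

(* Knowledge of a one-to-all distance based algorithm that queried exactly
   the nodes of L: the correctness certifies e(u) >= rad(G) for every u
   using only the queried distances, triangle inequality and
   non-negativity, i.e. in every nonnegative function D satisfying the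
   triangle inequality and agreeing with d on all queried pairs, every u
   has some v with D(u,v) >= rad(G). *)
Definition consistent_distance (L : {set T}) (D : T -> T -> rat) : Prop :=
  [/\ forall a b, 0 <= D a b,
      forall a b c, D a c <= D a b + D b c
    & forall x v, x \in L -> D x v = (dist x v)%:R /\ D v x = (dist x v)%:R]%R.

Definition certifies_radius (L : {set T}) : Prop :=
  forall D : T -> T -> rat, consistent_distance L D ->
  forall u : T, exists v : T, ((rad%:R : rat) <= D u v)%R.

End Graph.

From HB Require Import structures.
From mathcomp Require Import all_boot all_order all_algebra.
From mathcomp Require Import zify.
Import Order.TTheory GRing.Theory Num.Theory.

Set Implicit Arguments.
Unset Strict Implicit.

(* The distances an algorithm can deduce from its queries at L are bounded
   below by the landmark metric D(a,b) = max_{x in L} |d(x,a) - d(x,b)|: it is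
   a pseudometric agreeing with d on every queried pair, so certification
   forces, for every u, some v with D(u,v) >= rad(G).  On the other hand, if
   k bounds the distance from u to every x in L and to its antipode A(x), then
   |d(x,u) - d(x,v)| <= k for every v: either d(x,v) <= d(x,u), or
   d(x,v) - d(x,u) <= d(x,A(x)) - d(x,u) <= d(u,A(x)).  Taking for k the
   largest distance from u to L u A(L) shows that L u A(L) is a radius
   certificate, and it has at most 2|L| nodes. *)

Section GraphDistance.
Variables (T : finType) (e : rel T).
Hypotheses (e_simple : simple_graph e) (e_connected : connected_graph e).

Lemma dist_leq_walk u v n : walk_of_length e u v n -> dist e u v <= n.
Proof.
move=> uv_n; rewrite /dist.
have [n_lt|] := ltnP n #|T|; last first.
  by apply: leq_trans; rewrite -[X in _ <= X](size_iota 0) find_size.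
rewrite leqNgt; apply/negP => /(before_find 0).
by rewrite nth_iota // add0n uv_n.
Qed.

Lemma walk_dist u v : walk_of_length e u v (dist e u v).
Proof.
have [p e_p last_p] := connectP (e_connected u v).
case: (shortenP e_p) last_p => p' e_p' uniq_p' _ last_p'.
have p'_lt : size p' < #|T|.
  by have := max_card (mem (u :: p')); rewrite (card_uniqP uniq_p').
have uv_p' : walk_of_length e u v (size p').
  by apply/existsP; exists (in_tuple p'); rewrite /= e_p' -last_p' eqxx.
have has_walk : has (walk_of_length e u v) (iota 0 #|T|).
  by apply/hasP; exists (size p'); rewrite ?mem_iota.
have := nth_find 0 has_walk; rewrite nth_iota ?add0n //.
by move: has_walk; rewrite has_find size_iota.
Qed.

Lemma walk_cat u v w n m :
  walk_of_length e u v n -> walk_of_length e v w m ->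
  walk_of_length e u w (n + m).
Proof.
move=> /existsP[p /andP[e_p /eqP last_p]] /existsP[q /andP[e_q /eqP last_q]].
have size_pq : size (tval p ++ tval q) == n + m by rewrite size_cat !size_tuple.
apply/existsP; exists (Tuple size_pq) => /=.
by rewrite cat_path last_cat last_p e_p e_q last_q /=.
Qed.

Lemma walk_rev u v n : walk_of_length e u v n -> walk_of_length e v u n.
Proof.
case: e_simple => e_sym _ /existsP[p /andP[e_p /eqP last_p]].
have size_rp : size (rev (belast u p)) == n.
  by rewrite size_rev size_belast size_tuple.
apply/existsP; exists (Tuple size_rp) => /=.
rewrite -last_p rev_path (@eq_path _ _ e) => [|a b /=]; last by rewrite e_sym.
by rewrite e_p /=; case: (tval p) => [|y s] //=; rewrite rev_cons last_rcons.
Qed.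

Lemma distC u v : dist e u v = dist e v u.
Proof.
by apply/eqP; rewrite eqn_leq !dist_leq_walk // walk_rev // walk_dist.
Qed.

Lemma dist_triangle u v w : dist e u w <= dist e u v + dist e v w.
Proof. by apply: dist_leq_walk; apply: walk_cat; apply: walk_dist. Qed.

Lemma distxx u : dist e u u = 0.
Proof.
apply/eqP; rewrite -leqn0; apply: dist_leq_walk.
by apply/existsP; exists [tuple]; rewrite /= eqxx.
Qed.

Lemma exists_antipode disp (O : orderType disp) (r : T -> O) x :
  exists v, is_antipode e r x v.
Proof.
have [v0 _ v0_far] := @arg_maxP _ nat T x predT (dist e x) isT.
have [v /eqP v_far v_top] :=
  @arg_maxP _ _ T v0 (fun w => dist e x w == dist e x v0) r (eqxx _).
exists v; apply/forallP => w.
case: (ltngtP (dist e x w) (dist e x v)) => //= [v_lt_w|w_eq_v]; last first.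
  by apply: v_top; rewrite w_eq_v v_far.
have w_le_v0 : dist e x w <= dist e x v0 := v0_far w isT.
by rewrite -v_far leqNgt v_lt_w in w_le_v0.
Qed.

Lemma dist_leq_antipode disp (O : orderType disp) (r : T -> O) x w :
  dist e x w <= dist e x (antipode e r x).
Proof.
rewrite /antipode; case: pickP => [v /forallP/(_ w)|no_antipode].
  by case/orP => [/ltnW //|/andP[/eqP -> _]].
by have [v] := exists_antipode r x; rewrite no_antipode.
Qed.

End GraphDistance.

Section LandmarkDistance.
Variables (T : finType) (e : rel T) (L : {set T}).
Hypotheses (e_simple : simple_graph e) (e_connected : connected_graph e).

Definition dist_gap (x a b : T) : nat :=
  maxn (dist e x a - dist e x b) (dist e x b - dist e x a).

Definition landmark_dist (a b : T) : nat := \max_(x in L) dist_gap x a b.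

Lemma landmark_distC a b : landmark_dist a b = landmark_dist b a.
Proof. by apply: eq_bigr => x _; rewrite /dist_gap maxnC. Qed.

Lemma landmark_dist_triangle a b c :
  landmark_dist a c <= landmark_dist a b + landmark_dist b c.
Proof.
apply/bigmax_leqP => x xL.
have := @leq_bigmax_cond _ _ (fun x => dist_gap x a b) _ xL.
have := @leq_bigmax_cond _ _ (fun x => dist_gap x b c) _ xL.
rewrite -/(landmark_dist a b) -/(landmark_dist b c) /dist_gap; lia.
Qed.

Lemma landmark_dist_landmark x v : x \in L -> landmark_dist x v = dist e x v.
Proof.
move=> xL; apply/eqP; rewrite eqn_leq; apply/andP; split.
  apply/bigmax_leqP => y _.
  have := dist_triangle e_connected y x v.
  have := dist_triangle e_connected y v x.
  rewrite (distC e_simple e_connected v x) /dist_gap; lia.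
apply: leq_trans (@leq_bigmax_cond _ _ (fun y => dist_gap y x v) _ xL).
by rewrite /dist_gap distxx //; lia.
Qed.

Lemma landmark_dist_consistent :
  consistent_distance e L (fun a b => (landmark_dist a b)%:R : rat).
Proof.
split=> [a b|a b c|x v xL]; first by rewrite ler0n.
  by rewrite -natrD ler_nat landmark_dist_triangle.
by rewrite (landmark_distC v x) landmark_dist_landmark.
Qed.

Lemma landmark_dist_leq_antipode disp (O : orderType disp) (r : T -> O) u v k :
  (forall x, x \in L -> dist e u x <= k /\ dist e u (antipode e r x) <= k) ->
  landmark_dist u v <= k.
Proof.
move=> u_near; apply/bigmax_leqP => x xL.
have [ux_le uAx_le] := u_near x xL.
have := dist_leq_antipode e r x v.
have := dist_triangle e_connected x u (antipode e r x).
rewrite /dist_gap (distC e_simple e_connected u x) in ux_le uAx_le *; lia.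
Qed.

End LandmarkDistance.

Lemma antipode_setU_radius_certificate (T : finType) (e : rel T) (L : {set T})
    disp (O : orderType disp) (r : T -> O) :
  simple_graph e -> connected_graph e -> certifies_radius e L ->
  radius_certificate e (L :|: antipode_set e r L).
Proof.
move=> e_simple e_connected L_certifies u.
have [v] := L_certifies _ (landmark_dist_consistent L e_simple e_connected) u.
rewrite ler_nat => /leq_trans; apply.
apply: (landmark_dist_leq_antipode e_simple e_connected (r := r)) => x xL.
by split; apply: leq_bigmax_cond; rewrite in_setU ?xL ?imset_f ?orbT.
Qed.

Lemma card_antipode_setU (T : finType) (e : rel T) (L : {set T})
    disp (O : orderType disp) (r : T -> O) :
  #|L :|: antipode_set e r L| <= 2 * #|L|.
Proof.
rewrite mul2n -addnn cardsU; apply: leq_trans (leq_subr _ _) _.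
by rewrite leq_add2l leq_imset_card.
Qed.

Theorem theorem2 (T : finType) (e : rel T) (L : {set T}) :
  simple_graph e -> connected_graph e ->
  certifies_radius e L ->
  (forall (disp : Order.disp_t) (O : orderType disp) (r : T -> O),
      injective r -> radius_certificate e (L :|: antipode_set e r L)) /\
  (forall Lopt : {set T}, radius_certificate e Lopt ->
      (forall C : {set T}, radius_certificate e C -> #|Lopt| <= #|C|) ->
      #|Lopt| <= 2 * #|L|).
Proof.
move=> e_simple e_connected L_certifies; split=> [disp O r _|Lopt _ Lopt_min].
  exact: antipode_setU_radius_certificate.
apply: leq_trans (card_antipode_setU e L (@enum_rank T)).
exact/Lopt_min/antipode_setU_radius_certificate.
Qed.
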